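(* Let $\psi:[0,\infty)\to(-\infty,0]$ be a monotonically increasing (non-decreasing) function and let $p$ be a seminorm on the locally convex space $E$ over $K$. Then the function $\phi:E\to\mathbb R$, $\phi(x)=\psi(p(x))$, is convex.
   Context: $K$ is a field complete with respect to a non-trivial non-archimedean absolute value, $B_K=\{x\in K:|x|\le1\}$. Seminorms are non-archimedean: $p(x+y)\le\max(p(x),p(y))$ and $p(\lambda x)=|\lambda|p(x)$. A function $\phi:E\to\mathbb R$ is convex if for all $n$, $x_1,\dots,x_n\in E$ and $\lambda_1,\dots,\lambda_n\in B_K$ with $\sum\lambda_i=1$ one has $\phi(\sum\lambda_ix_i)\le\max_i|\lambda_i|\phi(x_i)$. *)

From HB Require Import structures.
From mathcomp Require Import all_boot all_order all_algebra.
From mathcomp Require Import reals.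
Set Implicit Arguments. Unset Strict Implicit. Unset Printing Implicit Defensive.
Import Order.TTheory GRing.Theory Num.Theory.
Local Open Scope ring_scope.

Record complete_nonarch_abs (K : fieldType) (R : realType) (abs : K -> R) : Prop := {
  abs_ge0 : forall x, 0 <= abs x;
  abs_eq0 : forall x, abs x = 0 <-> x = 0;
  absM : forall x y, abs (x * y) = abs x * abs y;
  abs_ultra : forall x y, abs (x + y) <= Num.max (abs x) (abs y);
  abs_nontrivial : exists x, abs x != 0 /\ abs x != 1;
  abs_complete : forall u : nat -> K,
    (forall e : R, 0 < e -> exists N, forall m n, (N <= m)%N -> (N <= n)%N ->
        abs (u m - u n) < e) ->
    exists l, forall e : R, 0 < e -> exists N, forall n, (N <= n)%N ->
        abs (u n - l) < e
}.

Definition nonarch_seminorm (K : fieldType) (R : realType) (abs : K -> R)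
  (E : lmodType K) (p : E -> R) : Prop :=
  (forall x y, p (x + y) <= Num.max (p x) (p y)) /\
  (forall (l : K) x, p (l *: x) = abs l * p x).

(* convexity: for all n >= 1 (n = 0 is vacuous since an empty sum is 0 <> 1),
   x_0..x_{n-1} in E, lambda_i in B_K with sum 1,
   phi (sum lambda_i x_i) <= max_i |lambda_i| phi(x_i). *)
Definition nonarch_convex (K : fieldType) (R : realType) (abs : K -> R)
  (E : lmodType K) (phi : E -> R) : Prop :=
  forall (n : nat) (x : 'I_n.+1 -> E) (lam : 'I_n.+1 -> K),
    (forall i, abs (lam i) <= 1) ->
    \sum_(i < n.+1) lam i = 1 ->
    phi (\sum_(i < n.+1) lam i *: x i) <=
      \big[Num.max/abs (lam ord0) * phi (x ord0)]_(i < n.+1) (abs (lam i) * phi (x i)).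

(* By the ultrametric inequality, p (\sum_i l_i x_i) <= max_i |l_i| p (x_i),
   and since |l_i| <= 1 this is at most p (x_j) for the index j realising the
   maximum.  As psi is nondecreasing and nonpositive,
   psi (p (\sum_i l_i x_i)) <= psi (p (x_j)) <= |l_j| psi (p (x_j)). *)

From HB Require Import structures.
From mathcomp Require Import all_boot all_order all_algebra.
From mathcomp Require Import reals.
Set Implicit Arguments. Unset Strict Implicit.
Import Order.TTheory GRing.Theory Num.Theory.
Local Open Scope ring_scope.

Section UltrametricSeminorm.

Variables (R : realType) (K : fieldType) (abs : K -> R) (E : lmodType K) (p : E -> R).

Hypothesis abs_nneg : forall a, 0 <= abs a.
Hypothesis abs_eq0_iff : forall a, abs a = 0 <-> a = 0.
Hypothesis p_ultra : forall x y, p (x + y) <= Num.max (p x) (p y).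
Hypothesis pZ : forall (a : K) x, p (a *: x) = abs a * p x.

Lemma seminorm0 : p 0 = 0.
Proof. by rewrite -(scale0r (0 : E)) pZ (abs_eq0_iff 0).2 ?mul0r. Qed.

Lemma seminorm_ge0 x : 0 <= p x.
Proof.
rewrite leNgt; apply/negP => px_lt0.
have absN1_gt0 : 0 < abs (-1).
  rewrite lt_def abs_nneg andbT; apply/eqP => /abs_eq0_iff /eqP.
  by rewrite oppr_eq0 oner_eq0.
have := p_ultra x (- x).
rewrite subrr seminorm0 -scaleN1r pZ le_max !leNgt px_lt0 /=.
by rewrite pmulr_rlt0 ?px_lt0.
Qed.

Lemma seminorm_sum_le (I : Type) (r : seq I) (P : pred I) (F : I -> E) M :
  0 <= M -> (forall i, P i -> p (F i) <= M) ->
  p (\sum_(i <- r | P i) F i) <= M.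
Proof.
move=> M_ge0 FM; apply: (big_ind (fun y => p y <= M)) => //.
- by rewrite seminorm0.
- by move=> y z py pz; apply: le_trans (p_ultra y z) _; rewrite ge_max py pz.
Qed.

Lemma seminorm_combination_le (I : finType) (i0 : I) (x : I -> E) (lam : I -> K) :
  (forall i, abs (lam i) <= 1) ->
  exists j, p (\sum_i lam i *: x i) <= p (x j).
Proof.
move=> lam_le1; pose F i := abs (lam i) * p (x i).
have [j _ Fj_max] := @arg_maxP _ _ I i0 xpredT F erefl.
exists j; apply: (@le_trans _ _ (F j)).
  apply: seminorm_sum_le => [|i _]; first by rewrite mulr_ge0 ?seminorm_ge0.
  by rewrite pZ; apply: Fj_max.
by rewrite ler_piMl ?seminorm_ge0.
Qed.

End UltrametricSeminorm.

Theorem mainTheorem7 (R : realType) (K : fieldType) (abs : K -> R)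
  (habs : complete_nonarch_abs abs) (E : lmodType K)
  (psi : R -> R)
  (psi_le0 : forall t, 0 <= t -> psi t <= 0)
  (psi_mono : forall s t, 0 <= s -> s <= t -> psi s <= psi t)
  (p : E -> R) (hp : nonarch_seminorm abs p) :
  nonarch_convex abs (fun x => psi (p x)).
Proof.
have [p_ultra pZ] := hp.
have p_ge0 := seminorm_ge0 (abs_ge0 habs) (abs_eq0 habs) p_ultra pZ.
move=> n x lam lam_le1 _.
have [j pj] := seminorm_combination_le (abs_ge0 habs) (abs_eq0 habs) p_ultra pZ ord0 x lam_le1.
apply: le_trans (le_bigmax _ _ j) => /=.
apply: le_trans (psi_mono _ _ (p_ge0 _) pj) _.
exact: ler_niMl (psi_le0 _ (p_ge0 _)) (lam_le1 j).
Qed.
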